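(* With the setup in the context, fix $X\subseteq E\setminus B$ and $Y\subseteq E$. Suppose the message $\mathbf{m}\in A^{E\setminus B}$ is chosen uniformly at random, and the transmitted word $\mathbf{w}\in C_{\mathbf{m}}$ is then chosen uniformly at random; let $\mathbf{M}=\mathbf{m}_X$ and $\mathbf{t}=\mathbf{w}_Y$. Then the conditional entropy (with logarithms to base $|A|$) $H(\mathbf{m}\mid\mathbf{t},\mathbf{M})=\sum_{\mathbf{M}\in A^X,\mathbf{t}\in A^Y}p(\mathbf{M},\mathbf{t})\sum_{\mathbf{m}\in A^{E\setminus B}}p(\mathbf{m}\mid\mathbf{t},\mathbf{M})\log_{|A|}\frac{1}{p(\mathbf{m}\mid\mathbf{t},\mathbf{M})}$ (with $0\log\frac10=0$) equals $n-k-|X|-\rho_X(Y)$.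
   Context: An almost affine code over a finite alphabet $A$ of length $n$ and dimension $k$ is a subset $C\subseteq A^n$ with $|C|=|A|^k$ such that for every $X\subseteq E=\{1,\dots,n\}$, $\log_{|A|}|C_X|$ is a nonnegative integer ($C_X$ = projection onto coordinates $X$); its associated matroid $M_C$ has rank function $r(X)=\log_{|A|}|C_X|$. Setup: $C$ is an almost affine code of length $n$ and dimension $k$ over $A$ with matroid rank function $r$; $B\subseteq E$ is a basis of $M_C$; $\varphi:A\times A\to A$ is such that for every $y\in A$ both $\varphi(y,\cdot)$ and $\varphi(\cdot,y)$ are bijections. For $\mathbf{m}\in A^{E\setminus B}$, $\Phi_{\mathbf{m}}(\mathbf{w})_i=\mathbf{w}_i$ for $i\in B$ and $=\varphi(\mathbf{w}_i,\mathbf{m}_i)$ for $i\in E\setminus B$, and $C_{\mathbf{m}}=\Phi_{\mathbf{m}}(C)$. For $X\subseteq E\setminus B$ and $\mathbf{M}\in A^X$, $D_{X,\mathbf{M}}=\bigcup_{\mathbf{m}_X=\mathbf{M}}C_{\mathbf{m}}$, an almost affine code with rank function $r_D(Y)=|Y\setminus(B\cup X)|+r(Y\cap(B\cup X))$ (independent of $\mathbf{M}$), and $\rho_X(Y)=r_D(Y)-r(Y)$. *)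

From Stdlib Require Import Reals.
From HB Require Import structures.
From mathcomp Require Import all_boot.

Set Implicit Arguments.
Unset Strict Implicit.
Unset Printing Implicit Defensive.

(* Words of length n over A are {ffun 'I_n -> A}; E = 'I_n.
   Partial words (elements of A^X for X a subset of E) are encoded as
   {ffun 'I_n -> option A} which are Some exactly on X. *)

Definition pword (A : finType) (n : nat) := {ffun 'I_n -> option A}.

Definition restr (A : finType) n (X : {set 'I_n}) (w : {ffun 'I_n -> A})
  : pword A n := [ffun i => if i \in X then Some (w i) else None].

Definition restrp (A : finType) n (X : {set 'I_n}) (m : pword A n)
  : pword A n := [ffun i => if i \in X then m i else None].

Definition on_support (A : finType) n (X : {set 'I_n}) (m : pword A n) : bool :=
  [forall i, (m i != None) == (i \in X)].

Definition proj (A : finType) n (C : {set {ffun 'I_n -> A}}) (X : {set 'I_n})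
  : {set pword A n} := [set restr X w | w in C].

Definition almost_affine (A : finType) n (k : nat) (C : {set {ffun 'I_n -> A}}) :=
  #|C| = #|A| ^ k /\ forall X : {set 'I_n}, exists r : nat, #|proj C X| = #|A| ^ r.

(* rank function r(X) = log_{|A|} |C_X| (exact for almost affine codes) *)
Definition rk (A : finType) n (C : {set {ffun 'I_n -> A}}) (X : {set 'I_n}) : nat :=
  trunc_log #|A| #|proj C X|.

Definition is_basis (A : finType) n (C : {set {ffun 'I_n -> A}}) (B : {set 'I_n}) :=
  rk C B = #|B| /\ rk C B = rk C setT.

Definition Phi (A : finType) n (phi : A -> A -> A) (m : pword A n) (w : {ffun 'I_n -> A})
  : {ffun 'I_n -> A} :=
  [ffun i => match m i with Some a => phi (w i) a | None => w i end].

Definition Cm (A : finType) n (phi : A -> A -> A) (C : {set {ffun 'I_n -> A}}) (m : pword A n)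
  : {set {ffun 'I_n -> A}} := [set Phi phi m w | w in C].

Definition messages (A : finType) n (B : {set 'I_n}) : {set pword A n} :=
  [set m | on_support (~: B) m].

Definition pjoint (A : finType) n (phi : A -> A -> A) (C : {set {ffun 'I_n -> A}})
  (B : {set 'I_n}) (m : pword A n) (w : {ffun 'I_n -> A}) : R :=
  if (m \in messages A B) && (w \in Cm phi C m)
  then Rmult (Rinv (INR #|messages A B|)) (Rinv (INR #|Cm phi C m|)) else R0.

Definition pMt (A : finType) n phi C (B X Y : {set 'I_n}) (M t : pword A n) : R :=
  \big[Rplus/R0]_(m : pword A n) \big[Rplus/R0]_(w : {ffun 'I_n -> A})
     (if (restrp X m == M) && (restr Y w == t) then pjoint phi C B m w else R0).

Definition pmMt (A : finType) n phi C (B X Y : {set 'I_n}) (m M t : pword A n) : R :=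
  \big[Rplus/R0]_(w : {ffun 'I_n -> A})
     (if (restrp X m == M) && (restr Y w == t) then pjoint phi C B m w else R0).

(* p(m | t, M) (set to 0 when p(M,t) = 0; such terms carry weight 0) *)
Definition pcond (A : finType) n phi C (B X Y : {set 'I_n}) (m M t : pword A n) : R :=
  if Req_EM_T (pMt phi C B X Y M t) R0 then R0
  else Rdiv (pmMt phi C B X Y m M t) (pMt phi C B X Y M t).

Definition xlog1x (base : nat) (q : R) : R :=
  if Req_EM_T q R0 then R0 else Rmult q (Rdiv (ln (Rinv q)) (ln (INR base))).

Definition cond_entropy (A : finType) n phi C (B X Y : {set 'I_n}) : R :=
  \big[Rplus/R0]_(M : pword A n | on_support X M)
   \big[Rplus/R0]_(t : pword A n | on_support Y t)
     (Rmult (pMt phi C B X Y M t)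
      (\big[Rplus/R0]_(m : pword A n | m \in messages A B)
         xlog1x #|A| (pcond phi C B X Y m M t))).

Definition rD (A : finType) n (C : {set {ffun 'I_n -> A}}) (B X Y : {set 'I_n}) : nat :=
  #|Y :\: (B :|: X)| + rk C (Y :&: (B :|: X)).

Definition rho (A : finType) n (C : {set {ffun 'I_n -> A}}) (B X Y : {set 'I_n}) : R :=
  Rminus (INR (rD C B X Y)) (INR (rk C Y)).

From Stdlib Require Import Reals Lra.
From HB Require Import structures.
From mathcomp Require Import all_boot zify Rstruct.

(* A fibre {w in C | w_Y = w0_Y} of an almost affine code has |A|^(k - r(Y))
   elements: a maximal I in Y with |C_I| = |A|^|I| determines the coordinates
   in Y, and extending I to such a maximal J in E (so |J| = k and C_J = A^J)
   shows that the fibre is free exactly on J \ I.  As Phi_m is a coordinatewise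
   bijection, the number of c in C with (Phi_m c)_Y = t is 0 or |A|^(k - r(Y)).
   Summing over the messages m with m_X = M, the coordinates of Y in B u X
   constrain c alone, those of Y outside B u X determine m there, and m is free
   off Y u B u X; so |A^(E\B)| |C| p(M, t) is 0 or
   |A|^(k - r(Y n (B u X)) + |E \ (Y u B u X)|).  Hence, given (M, t), m is
   uniform on its support, and H(m | t, M) is the logarithm of the ratio of
   these two counts. *)

Set Implicit Arguments.
Unset Strict Implicit.
Unset Printing Implicit Defensive.

Section PartialWords.
Variables (A : finType) (n : nat).
Notation word := {ffun 'I_n -> A}.
Notation pw := (pword A n).

Definition prodset (F : 'I_n -> {set option A}) : {set pw} :=
  [set m : pw | [forall i, m i \in F i]].

Lemma card_prodset F : #|prodset F| = \prod_i #|F i|.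
Proof.
have -> : #|prodset F| = #|(family (fun i => mem (F i)) : simpl_pred pw)|.
  by apply: eq_card => m; rewrite inE; apply/forallP/familyP.
by rewrite card_family foldrE big_map /index_enum /= enumT.
Qed.

Lemma prod_in_const (S : {set 'I_n}) (q : nat) (f : 'I_n -> nat) :
  (forall i, f i = if i \in S then q else 1) -> \prod_i f i = q ^ #|S|.
Proof.
move=> Hf; rewrite -prod_nat_const [RHS]big_mkcond /=.
by apply: eq_bigr => i _; rewrite Hf.
Qed.

Lemma card_imset_Some (D : {set A}) : #|Some @: D| = #|D|.
Proof. by apply: card_imset => x y [->]. Qed.

Lemma mem_imset_Some (D : {set A}) (o : option A) :
  (o \in Some @: D) = if o is Some x then x \in D else false.
Proof.
case: o => [x|]; first by rewrite (mem_imset _ _ (@Some_inj _)).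
by apply/imsetP => -[].
Qed.

Definition supp_words (S : {set 'I_n}) : {set pw} :=
  prodset (fun i => if i \in S then Some @: [set: A] else [set None]).

Lemma supp_wordsE S : supp_words S = [set m | on_support S m].
Proof.
apply/setP => m; rewrite !inE; apply: eq_forallb => i.
by case: (i \in S) (m i) => [] [a|]; rewrite ?mem_imset_Some ?inE.
Qed.

Lemma card_supp_words S : #|supp_words S| = #|A| ^ #|S|.
Proof.
rewrite card_prodset; apply: prod_in_const => i.
by case: ifP => _; rewrite ?card_imset_Some ?cardsT ?cards1.
Qed.

Lemma on_supportP (S : {set 'I_n}) (m : pw) :
  reflect (forall i, (m i == None) = (i \notin S)) (on_support S m).
Proof.
apply: (iffP forallP) => H i; last by rewrite H negbK.
by have := H i; case: (m i) => [a|] /eqP <-.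
Qed.

Lemma restr_on_support (Z : {set 'I_n}) (w : word) : on_support Z (restr Z w).
Proof. by apply/on_supportP => i; rewrite ffunE; case: ifP. Qed.

Lemma restr_eqP (Z : {set 'I_n}) (w w' : word) :
  reflect {in Z, w =1 w'} (restr Z w == restr Z w').
Proof.
apply: (iffP eqP) => [H i iZ | H].
  by move/ffunP: H => /(_ i); rewrite !ffunE iZ => -[].
by apply/ffunP => i; rewrite !ffunE; case: ifP => // /H ->.
Qed.

Lemma restrp_restr (I J : {set 'I_n}) (w : word) :
  I \subset J -> restrp I (restr J w) = restr I w.
Proof.
move=> sIJ; apply/ffunP => i; rewrite !ffunE.
by case: ifP => // iI; rewrite (subsetP sIJ _ iI).
Qed.

End PartialWords.

Section Projections.
Variables (A : finType) (n : nat) (C : {set {ffun 'I_n -> A}}).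

Lemma proj_sub_supp_words (I : {set 'I_n}) : proj C I \subset supp_words A I.
Proof.
by apply/subsetP => _ /imsetP [w _ ->]; rewrite supp_wordsE inE restr_on_support.
Qed.

Lemma proj_restrp (I J : {set 'I_n}) : I \subset J -> proj C I = restrp I @: proj C J.
Proof.
move=> sIJ; rewrite /proj -imset_comp; apply: eq_imset => w /=.
by rewrite restrp_restr.
Qed.

Lemma leq_card_proj (I J : {set 'I_n}) : I \subset J -> #|proj C I| <= #|proj C J|.
Proof. by move=> sIJ; rewrite (proj_restrp sIJ) leq_imset_card. Qed.

Lemma card_proj_setU1 (I : {set 'I_n}) (j : 'I_n) :
  #|proj C (j |: I)| <= #|proj C I| * #|A|.
Proof.
pose f (v : pword A n) := (restrp I v, v j).
have f_inj : {in proj C (j |: I) &, injective f}.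
  move=> _ _ /imsetP [w wC ->] /imsetP [w' w'C ->] [eI ej].
  rewrite !restrp_restr ?subsetUr // in eI.
  apply/eqP/restr_eqP => i; rewrite !inE => /orP [/eqP -> | iI].
    by move: ej; rewrite !ffunE !inE eqxx => -[].
  by move/eqP/restr_eqP: eI; apply.
rewrite -(card_in_imset f_inj) -cardsT -(card_imset_Some [set: A]) -cardsX.
apply: subset_leq_card; apply/subsetP => _ /imsetP [_ /imsetP [w wC ->] ->].
rewrite inE /= (proj_restrp (subsetUr [set j] I)) !ffunE !inE eqxx.
by rewrite !imset_f ?inE.
Qed.

Lemma restr_det_of_card_proj_eq (I J : {set 'I_n}) :
  I \subset J -> #|proj C I| = #|proj C J| ->
  {in C &, forall w w', restr I w = restr I w' -> restr J w = restr J w'}.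
Proof.
move=> sIJ eIJ w w' wC w'C eI.
have : {in proj C J &, injective (restrp I)}.
  by apply/imset_injP; rewrite -proj_restrp // eIJ.
by apply; rewrite ?imset_f // !restrp_restr.
Qed.

End Projections.

Section AlmostAffineFibers.
Variables (A : finType) (n k : nat) (C : {set {ffun 'I_n -> A}}).
Hypotheses (A_gt1 : 1 < #|A|) (C_aa : almost_affine k C).
Notation word := {ffun 'I_n -> A}.

Definition indep (J : {set 'I_n}) : bool := #|proj C J| == #|A| ^ #|J|.

Definition max_indep (Y I : {set 'I_n}) : Prop :=
  maxset [pred J : {set 'I_n} | indep J && (J \subset Y)] I.

Lemma card_code : #|C| = #|A| ^ k.
Proof. by case: C_aa. Qed.

Lemma code_gt0 : 0 < #|C|.
Proof. by rewrite card_code expn_gt0 ltnW. Qed.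

Lemma exists_max_indep (Y J : {set 'I_n}) :
  indep J -> J \subset Y -> exists2 I, max_indep Y I & J \subset I.
Proof.
move=> iJ sJY.
have [|I] := @maxset_exists _ [pred J | indep J && (J \subset Y)] J; last by exists I.
by rewrite /= iJ sJY.
Qed.

Lemma indep0 : indep set0.
Proof.
have /card_gt0P [w0 w0C] := code_gt0.
rewrite /indep cards0 expn0; apply/cards1P; exists (restr set0 w0).
apply/esym/eqP; rewrite eqEcard cards1 sub1set imset_f //=.
rewrite (leq_trans (subset_leq_card (proj_sub_supp_words C set0))) //.
by rewrite card_supp_words cards0.
Qed.

(* Adding a coordinate multiplies |C_J| by 1 or |A| (almost affinity), and
   maximality of I excludes the factor |A|: so C_I determines C_(j |: I). *)
Lemma max_indep_restr_det (Y I : {set 'I_n}) : max_indep Y I ->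
  {in C &, forall w w', restr I w = restr I w' -> restr Y w = restr Y w'}.
Proof.
move=> mI w w' wC w'C eI; have /andP [/eqP pI sIY] := maxsetp mI.
apply/eqP/restr_eqP => j jY; case: (boolP (j \in I)) => jI.
  by move/eqP/restr_eqP: eI; apply.
have sIJ : I \subset j |: I by apply: subsetUr.
have [r pJ] := C_aa.2 (j |: I).
have := leq_card_proj C sIJ; have := card_proj_setU1 C I j.
rewrite pJ pI -expnSr !leq_exp2l // => r_le r_ge.
have [r_eq | r_eq] : r = #|I| \/ r = #|I|.+1 by lia.
  have /(restr_det_of_card_proj_eq sIJ) det : #|proj C I| = #|proj C (j |: I)|.
    by rewrite pJ pI r_eq.
  by move/eqP/restr_eqP: (det w w' wC w'C eI); apply; rewrite !inE eqxx.
have indepJ : indep (j |: I) by rewrite /indep pJ cardsU1 jI r_eq.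
have PJ : [pred J | indep J && (J \subset Y)] (j |: I).
  by rewrite /= indepJ subUset sub1set jY sIY.
by move: jI; rewrite -(maxsetsup mI PJ sIJ) setU11.
Qed.

Lemma rk_max_indep (Y I : {set 'I_n}) : max_indep Y I -> rk C Y = #|I|.
Proof.
move=> mI; have /andP [/eqP pI sIY] := maxsetp mI.
rewrite /rk -(trunc_expnK #|I| A_gt1) -pI; congr trunc_log.
rewrite (proj_restrp C sIY); apply/esym/eqP/imset_injP.
move=> _ _ /imsetP [w wC ->] /imsetP [w' w'C ->].
by rewrite !restrp_restr //; apply: max_indep_restr_det.
Qed.

Lemma proj_indep (J : {set 'I_n}) : indep J -> proj C J = supp_words A J.
Proof.
move=> /eqP pJ; apply/eqP.
by rewrite eqEcard proj_sub_supp_words card_supp_words pJ leqnn.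
Qed.

Lemma max_indep_restr_inj (J : {set 'I_n}) :
  max_indep setT J -> {in C &, injective (restr J)}.
Proof.
move=> mJ w w' wC w'C /(max_indep_restr_det mJ wC w'C) /eqP /restr_eqP eT.
by apply/ffunP => i; apply: eT; rewrite inE.
Qed.

Lemma card_max_indep (J : {set 'I_n}) : max_indep setT J -> #|J| = k.
Proof.
move=> mJ; have /andP [/eqP pJ _] := maxsetp mJ.
apply/eqP; rewrite -(eqn_exp2l _ _ A_gt1) -pJ -card_code.
by rewrite (card_in_imset (max_indep_restr_inj mJ)).
Qed.

Lemma card_fiber_indep (I J : {set 'I_n}) (w0 : word) :
  I \subset J -> max_indep setT J -> w0 \in C ->
  #|[set w in C | restr I w == restr I w0]| = #|A| ^ (#|J| - #|I|).
Proof.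
move=> sIJ mJ w0C; have /andP [iJ _] := maxsetp mJ.
pose F i := if i \in I then [set Some (w0 i)]
            else if i \in J then Some @: [set: A] else [set None].
have inj : {in [set w in C | restr I w == restr I w0] &, injective (restr J)}.
  by move=> w w'; rewrite !inE => /andP [wC _] /andP [w'C _]; apply: max_indep_restr_inj.
rewrite -(card_in_imset inj).
have -> : restr J @: [set w in C | restr I w == restr I w0] = prodset F.
  apply/setP => v; apply/imsetP/idP.
    move=> [w]; rewrite inE => /andP [wC /restr_eqP eI] ->.
    rewrite inE; apply/forallP => i; rewrite ffunE /F.
    case: (boolP (i \in I)) => iI; first by rewrite (subsetP sIJ _ iI) eI // inE.
    by case: (i \in J); rewrite ?mem_imset_Some ?inE.
  rewrite inE => /forallP vF.
  have : v \in proj C J.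
    rewrite (proj_indep iJ) supp_wordsE inE; apply/on_supportP => i.
    move: (vF i); rewrite /F; case: ifP => [iI | _]; last first.
      by case: (i \in J) (v i) => [] [a|]; rewrite ?mem_imset_Some ?inE.
    by rewrite (subsetP sIJ _ iI) inE => /eqP ->.
  move=> /imsetP [w wC ev]; exists w => //; rewrite inE wC /=.
  apply/restr_eqP => i iI; move: (vF i).
  by rewrite /F iI ev ffunE (subsetP sIJ _ iI) inE => /eqP [].
rewrite card_prodset (prod_in_const (S := J :\: I) (q := #|A|)).
  by rewrite cardsD (setIidPr sIJ).
move=> i; rewrite /F !inE; case: ifP => iI /=; first by rewrite cards1.
by case: ifP => _; rewrite ?card_imset_Some ?cardsT ?cards1.
Qed.

Lemma exists_max_indep_chain (Y : {set 'I_n}) :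
  exists I J, [/\ max_indep Y I, max_indep setT J & I \subset J].
Proof.
have [I mI _] := exists_max_indep indep0 (sub0set Y).
have /andP [iI _] := maxsetp mI.
have [J mJ sIJ] := exists_max_indep iI (subsetT I).
by exists I, J.
Qed.

Lemma rk_le (Y : {set 'I_n}) : rk C Y <= k.
Proof.
have [I [J [mI mJ sIJ]]] := exists_max_indep_chain Y.
by rewrite (rk_max_indep mI) -(card_max_indep mJ) subset_leq_card.
Qed.

Lemma card_fiber (Y : {set 'I_n}) (w0 : word) : w0 \in C ->
  #|[set w in C | restr Y w == restr Y w0]| = #|A| ^ (k - rk C Y).
Proof.
move=> w0C; have [I [J [mI mJ sIJ]]] := exists_max_indep_chain Y.
have /andP [_ sIY] := maxsetp mI.
rewrite (rk_max_indep mI) -(card_max_indep mJ) -(card_fiber_indep sIJ mJ w0C).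
apply: eq_card => w; rewrite !inE; apply: andb_id2l => wC.
apply/eqP/eqP => [eY | eI]; last exact: max_indep_restr_det mI _ _ wC w0C eI.
by rewrite -(restrp_restr w sIY) -(restrp_restr w0 sIY) eY.
Qed.

Lemma rk_setT : rk C setT = k.
Proof.
rewrite /rk /proj card_in_imset ?card_code ?trunc_expnK // => w w' _ _ /eqP /restr_eqP e.
by apply/ffunP => i; apply: e; rewrite inE.
Qed.

Lemma card_basis (B : {set 'I_n}) : is_basis C B -> #|B| = k.
Proof. by case=> <- ->; apply: rk_setT. Qed.

End AlmostAffineFibers.

Section Translations.
Variables (A : finType) (n : nat) (phi : A -> A -> A).
Hypothesis phi_injl : forall a : A, injective (phi^~ a).
Notation word := {ffun 'I_n -> A}.

Lemma Phi_eqE (m : pword A n) (c c' : word) i :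
  (Phi phi m c i == Phi phi m c' i) = (c i == c' i).
Proof. by rewrite !ffunE; case: (m i) => // a; rewrite (inj_eq (@phi_injl a)). Qed.

Lemma Phi_inj (m : pword A n) : injective (Phi phi m).
Proof. by move=> c c' e; apply/ffunP => i; apply/eqP; rewrite -(Phi_eqE m) e. Qed.

Lemma restr_Phi_eq (Z : {set 'I_n}) (m : pword A n) (c c' : word) :
  (restr Z (Phi phi m c) == restr Z (Phi phi m c')) = (restr Z c == restr Z c').
Proof.
apply/restr_eqP/restr_eqP => H i /H /eqP; first by rewrite (Phi_eqE m) => /eqP.
by rewrite -(Phi_eqE m) => /eqP.
Qed.

Lemma card_Cm (C : {set word}) (m : pword A n) : #|Cm phi C m| = #|C|.
Proof. exact/card_imset/Phi_inj. Qed.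

End Translations.

Lemma ffun_eqE (I : finType) (T : eqType) (f g : {ffun I -> T}) :
  (f == g) = [forall i, f i == g i].
Proof. by apply/eqP/forallP => [-> // | H]; apply/ffunP => i; apply/eqP. Qed.

Lemma forallb_and (T : finType) (P Q : pred T) :
  [forall i, P i && Q i] = [forall i, P i] && [forall i, Q i].
Proof.
apply/forallP/andP => [H | [/forallP HP /forallP HQ] i]; last by rewrite HP HQ.
by split; apply/forallP => i; case/andP: (H i).
Qed.

Lemma card_set_in_sum (T : finType) (D : {pred T}) (P : pred T) :
  #|[set x in D | P x]| = \sum_(x in D) P x.
Proof.
rewrite -sum1_card [LHS]big_mkcond [RHS]big_mkcond; apply: eq_bigr => x _.
by rewrite inE; case: (x \in D); case: (P x).
Qed.

Lemma sum_card_fibers (T U : finType) (D : {set T}) (P : pred U) (f : T -> U) :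
  {in D, forall x, P (f x)} -> \sum_(u | P u) #|[set x in D | f x == u]| = #|D|.
Proof.
move=> DP; under eq_bigr do rewrite card_set_in_sum.
rewrite exchange_big /= -sum1_card; apply: eq_bigr => x xD.
rewrite (bigD1 (f x)) ?DP //= eqxx big1 ?addn0 // => u /andP [_ ne].
by rewrite eq_sym (negbTE ne).
Qed.

Lemma card_outside_coords n (B X Y : {set 'I_n}) : X \subset ~: B ->
  #|~: (Y :|: (B :|: X))| + #|Y :\: (B :|: X)| + #|B| + #|X| = n.
Proof.
move=> sXB; have dBX : B :&: X = set0.
  apply/setP => i; rewrite !inE andbC; apply/negP => /andP [/(subsetP sXB)].
  by rewrite inE => /negP.
have := cardsC (Y :|: (B :|: X)); have := cardsUI Y (B :|: X).
have := cardsID (B :|: X) Y; have := cardsUI B X.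
rewrite dBX cards0 card_ord; lia.
Qed.

Section MessageCounts.
Variables (A : finType) (n k : nat) (C : {set {ffun 'I_n -> A}})
  (B : {set 'I_n}) (phi : A -> A -> A) (X Y : {set 'I_n}).
Hypotheses (A_gt1 : 1 < #|A|) (C_aa : almost_affine k C)
  (phi_injr : forall a : A, injective (phi a))
  (phi_injl : forall a : A, injective (phi^~ a))
  (sXB : X \subset ~: B).
Notation word := {ffun 'I_n -> A}.
Notation pw := (pword A n).

Lemma messagesE : messages A B = supp_words A (~: B).
Proof. by rewrite supp_wordsE. Qed.

Lemma card_Phi_fiber (m : pw) (Z : {set 'I_n}) (T : pw) :
  #|[set c in C | restr Z (Phi phi m c) == T]| = 0
  \/ #|[set c in C | restr Z (Phi phi m c) == T]| = #|A| ^ (k - rk C Z).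
Proof.
have [-> | [c0]] := set_0Vmem [set c in C | restr Z (Phi phi m c) == T].
  by left; rewrite cards0.
rewrite inE => /andP [c0C /eqP <-]; right.
rewrite -(card_fiber A_gt1 C_aa Z c0C); apply: eq_card => c.
by rewrite !inE restr_Phi_eq.
Qed.

(* Equals |A^(E\B)| |C| p(m, M, t) (lemma [pmMtE]). *)
Definition joint_count (m M t : pw) : nat :=
  if (m \in messages A B) && (restrp X m == M)
  then #|[set c in C | restr Y (Phi phi m c) == t]| else 0.

Definition marg_count (M t : pw) : nat := \sum_(m : pw) joint_count m M t.

Lemma joint_count_dichotomy m M t :
  joint_count m M t = 0 \/ joint_count m M t = #|A| ^ (k - rk C Y).
Proof. by rewrite /joint_count; case: ifP => _; [apply: card_Phi_fiber | left]. Qed.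

Definition msg_choices (M t : pw) (c : word) (i : 'I_n) : {set option A} :=
  if i \in B then [set None] else if i \in X then [set M i]
  else if i \in Y then Some @: [set b | Some (phi (c i) b) == t i]
  else Some @: [set: A].

Lemma card_msg_choices M t c : on_support Y t ->
  #|prodset (msg_choices M t c)| = #|A| ^ #|~: (Y :|: (B :|: X))|.
Proof.
move=> /on_supportP tY; rewrite card_prodset; apply: prod_in_const => i.
rewrite /msg_choices !inE; case: (i \in B); first by rewrite /= orbT cards1.
case: (i \in X); first by rewrite /= !orbT cards1.
case: (boolP (i \in Y)) => iY /=; last by rewrite card_imset_Some cardsT.
have := tY i; rewrite iY; case: (t i) => [s|] // _.
have -> : [set b | Some (phi (c i) b) == Some s] = phi (c i) @^-1: [set s].
  by apply/setP => b; rewrite !inE.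
by rewrite card_imset_Some card_preimset ?cards1.
Qed.

Lemma notin_X_of_B i : i \in B -> i \notin X.
Proof. by move=> iB; apply/negP => /(subsetP sXB); rewrite inE iB. Qed.

Lemma joint_cond_coord (M t : pw) (c : word) i (o : option A) :
  (M i == None) = (i \notin X) -> (t i == None) = (i \notin Y) ->
  [&& (o != None) == (i \in ~: B),
      (if i \in X then o else None) == M i &
      (if i \in Y then Some (if o is Some a then phi (c i) a else c i) else None)
        == t i]
  = ((if i \in Y :&: (B :|: X) then Some (Phi phi M c i) else None)
       == (if i \in Y :&: (B :|: X) then t i else None))
    && (o \in msg_choices M t c i).
Proof.
move=> MX tY; rewrite /msg_choices ffunE !inE.
case: (boolP (i \in B)) => iB /=.
  move: MX; rewrite (negbTE (notin_X_of_B iB)) => /eqP ->.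
  by case: (i \in Y) tY => [_|/eqP ->]; case: o => [a|]; rewrite /= ?inE ?andbT ?andbF.
case: (i \in X) MX => /= [| /eqP ->].
  case: (M i) => [a|] //= _.
  case: (i \in Y) tY => [_|/eqP ->]; case: o => [b|]; rewrite /= ?inE ?andbT ?andbF //.
  by apply/andP/andP => -[]; [move=> /eqP [->] | move=> H /eqP [->]]; split.
by case: (i \in Y) tY => [_|/eqP ->]; case: o => [a|]; rewrite /= ?mem_imset_Some ?inE.
Qed.

Lemma joint_condE (M t m : pw) (c : word) : on_support X M -> on_support Y t ->
  [&& m \in messages A B, restrp X m == M & restr Y (Phi phi m c) == t]
  = (restr (Y :&: (B :|: X)) (Phi phi M c) == restrp (Y :&: (B :|: X)) t)
    && (m \in prodset (msg_choices M t c)).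
Proof.
move=> /on_supportP MX /on_supportP tY.
rewrite !inE /on_support !ffun_eqE -!forallb_and; apply: eq_forallb => i.
by rewrite !ffunE (joint_cond_coord c (m i) (MX i) (tY i)) ffunE.
Qed.

Lemma marg_countE M t : on_support X M -> on_support Y t ->
  marg_count M t =
  #|[set c in C | restr (Y :&: (B :|: X)) (Phi phi M c) == restrp (Y :&: (B :|: X)) t]|
  * #|A| ^ #|~: (Y :|: (B :|: X))|.
Proof.
move=> MX tY.
have count_pairs m : joint_count m M t = \sum_(c in C)
    [&& m \in messages A B, restrp X m == M & restr Y (Phi phi m c) == t].
  rewrite /joint_count; case: ifP => [/andP [-> ->] | H]; first exact: card_set_in_sum.
  by rewrite big1 // => c _; rewrite andbA H.
rewrite /marg_count (eq_bigr _ (fun m _ => count_pairs m)) exchange_big /=.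
rewrite card_set_in_sum big_distrl /=; apply: eq_bigr => c _.
under eq_bigr do rewrite joint_condE //.
case: (_ == _); last by rewrite big1.
rewrite mul1n -(card_msg_choices M c tY) -(card_set_in_sum predT) /=.
by apply: eq_card => m; rewrite inE.
Qed.

Lemma marg_count_dichotomy M t : on_support X M -> on_support Y t ->
  marg_count M t = 0 \/ marg_count M t =
    #|A| ^ (k - rk C (Y :&: (B :|: X))) * #|A| ^ #|~: (Y :|: (B :|: X))|.
Proof.
move=> MX tY; rewrite marg_countE //.
set Z := Y :&: (B :|: X).
by case: (card_Phi_fiber M Z (restrp Z t)) => ->; [left | right].
Qed.

Lemma restrp_on_support (m : pw) : m \in messages A B -> on_support X (restrp X m).
Proof.
rewrite inE => /on_supportP mB; apply/on_supportP => i; rewrite ffunE.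
case: ifP => iX //; rewrite mB inE negbK.
by apply/negP => /notin_X_of_B; rewrite iX.
Qed.

Lemma sum_marg_count :
  \sum_(M | on_support X M) \sum_(t | on_support Y t) marg_count M t
  = #|messages A B| * #|C|.
Proof.
rewrite /marg_count; under eq_bigr do rewrite exchange_big /=.
rewrite exchange_big /= -sum1_card big_distrl /= [RHS]big_mkcond /=.
apply: eq_bigr => m _; case: (boolP (m \in messages A B)) => mM; last first.
  by rewrite big1 // => M _; rewrite big1 // => t _; rewrite /joint_count (negbTE mM).
rewrite mul1n (bigD1 (restrp X m)) ?restrp_on_support //=.
rewrite [X in _ + X]big1 ?addn0; last first.
  move=> M /andP [_ ne]; apply: big1 => t _.
  by rewrite /joint_count mM eq_sym (negbTE ne).
under eq_bigr do rewrite /joint_count mM eqxx /=.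
by apply: sum_card_fibers => c _; apply: restr_on_support.
Qed.

End MessageCounts.

Section RealSums.
Local Open Scope R_scope.

Lemma INR_sum (I : finType) (P : pred I) (f : I -> nat) :
  INR (\sum_(i | P i) f i)%N = \big[Rplus/0]_(i | P i) INR (f i).
Proof. exact: (big_morph INR plus_INR). Qed.

Lemma sumR_const (I : finType) (S : pred I) (v : R) :
  \big[Rplus/0]_(i in S) v = INR #|S| * v.
Proof.
rewrite -sum1_card INR_sum big_distrl /=; apply: eq_bigr => i _.
by rewrite Rmult_1_l.
Qed.

Lemma INR_expn (m e : nat) : INR (m ^ e)%N = INR m ^ e.
Proof. by elim: e => //= e IH; rewrite expnS mult_INR IH. Qed.

Lemma ln_INR_expn (q e : nat) : (0 < q)%N -> ln (INR (q ^ e)) = INR e * ln (INR q).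
Proof. by move=> q_gt0; rewrite INR_expn ln_pow //; apply/lt_0_INR/ltP. Qed.

End RealSums.

Section Entropy.
Local Open Scope R_scope.
Variables (A : finType) (n k : nat) (C : {set {ffun 'I_n -> A}})
  (B : {set 'I_n}) (phi : A -> A -> A) (X Y : {set 'I_n}).
Hypotheses (A_gt1 : (1 < #|A|)%N) (C_aa : almost_affine k C)
  (phi_injr : forall a : A, injective (phi a))
  (phi_injl : forall a : A, injective (phi^~ a))
  (sXB : X \subset ~: B).
Notation pw := (pword A n).
Local Notation jc := (joint_count C B phi X Y).
Local Notation mc := (marg_count C B phi X Y).

Let total := INR #|messages A B| * INR #|C|.
Let sY := (#|A| ^ (k - rk C Y))%N.
Let sZ := (#|A| ^ (k - rk C (Y :&: (B :|: X))) * #|A| ^ #|~: (Y :|: (B :|: X))|)%N.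
Let L := ln (INR sZ / INR sY) / ln (INR #|A|).

Lemma INR_expn_gt0 e : 0 < INR (#|A| ^ e)%N.
Proof. by apply/lt_0_INR/ltP; rewrite expn_gt0 ltnW. Qed.

Lemma total_gt0 : 0 < total.
Proof.
apply: Rmult_lt_0_compat; apply/lt_0_INR/ltP; last exact: code_gt0 C_aa.
by rewrite messagesE card_supp_words expn_gt0 ltnW.
Qed.

Lemma sZ_gt0 : 0 < INR sZ.
Proof. by rewrite mult_INR; apply: Rmult_lt_0_compat; apply: INR_expn_gt0. Qed.

Lemma pmMtE m M t : pmMt phi C B X Y m M t = INR (jc m M t) / total.
Proof.
rewrite /pmMt /pjoint /joint_count.
case: (boolP ((m \in messages A B) && (restrp X m == M))) => [/andP [mM /eqP <-] | H].
  transitivity (\big[Rplus/0]_(w in [set w in Cm phi C m | restr Y w == t])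
                 (/ INR #|messages A B| * / INR #|Cm phi C m|)).
    rewrite [RHS]big_mkcond; apply: eq_bigr => w _; rewrite eqxx inE mM /=.
    by case: (restr Y w == t); case: (w \in Cm phi C m).
  rewrite sumR_const (card_Cm phi_injl) /Rdiv /total Rinv_mult.
  congr (INR _ * _); rewrite -[RHS](card_imset _ (Phi_inj phi_injl (m := m))).
  apply: eq_card => w; rewrite !inE; apply/andP/imsetP => [[/imsetP [c cC ->] e] | [c]].
    by exists c; rewrite // inE cC.
  by rewrite inE => /andP [cC e] ->; rewrite imset_f.
rewrite big1 /Rdiv ?Rmult_0_l // => w _.
case eM: (restrp X m == M) => //=.
by move: H; rewrite eM andbT => /negbTE ->; case: ifP.
Qed.

Lemma pMtE M t : pMt phi C B X Y M t = INR (mc M t) / total.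
Proof.
transitivity (\big[Rplus/0]_(m : pw) pmMt phi C B X Y m M t); first by [].
rewrite /marg_count INR_sum /Rdiv big_distrl /=; apply: eq_bigr => m _.
exact: pmMtE.
Qed.

Lemma pcondE m M t : mc M t = sZ -> pcond phi C B X Y m M t = INR (jc m M t) / INR sZ.
Proof.
move=> mcE; have := total_gt0; have := sZ_gt0.
rewrite /pcond pMtE pmMtE mcE; case: (Req_dec_T _ _) => [e | _] /= sZp tp.
  by have := Rdiv_lt_0_compat _ _ sZp tp; rewrite e => /Rlt_irrefl.
by field; lra.
Qed.

(* p(m | t, M) takes only the values 0 and sY / sZ. *)
Lemma xlog1x_joint m M t :
  xlog1x #|A| (INR (jc m M t) / INR sZ) = INR (jc m M t) / INR sZ * L.
Proof.
have := sZ_gt0; have sY_gt0 : 0 < INR sY by apply: INR_expn_gt0.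
rewrite /xlog1x; case: (Req_dec_T _ _) => [e | ne] /= sZp; first by rewrite e Rmult_0_l.
case: (joint_count_dichotomy B X Y A_gt1 C_aa phi_injl m M t) => jcE.
  by move: ne; rewrite jcE /= /Rdiv Rmult_0_l.
by rewrite jcE -/sY Rinv_div.
Qed.

Lemma sum_joint_count M t : (\sum_(m | m \in messages A B) jc m M t)%N = mc M t.
Proof.
rewrite /marg_count [RHS](bigID (fun m => m \in messages A B)) /=.
by rewrite [X in _ = (_ + X)%N]big1 ?addn0 // => m /negbTE mM; rewrite /joint_count mM.
Qed.

Lemma entropy_term M t : on_support X M -> on_support Y t ->
  pMt phi C B X Y M t *
    \big[Rplus/0]_(m | m \in messages A B) xlog1x #|A| (pcond phi C B X Y m M t)
  = pMt phi C B X Y M t * L.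
Proof.
move=> MX tY.
case: (marg_count_dichotomy A_gt1 C_aa phi_injr phi_injl sXB MX tY) => mcE.
  by rewrite pMtE mcE /Rdiv !Rmult_0_l.
congr (_ * _); under eq_bigr => m _ do rewrite pcondE // xlog1x_joint.
rewrite /Rdiv -!big_distrl /= -INR_sum sum_joint_count mcE -/sZ Rinv_r ?Rmult_1_l //.
by have := sZ_gt0; lra.
Qed.

Lemma sum_pMt : \big[Rplus/0]_(M | on_support X M) \big[Rplus/0]_(t | on_support Y t)
   pMt phi C B X Y M t = 1.
Proof.
transitivity (INR (\sum_(M | on_support X M) \sum_(t | on_support Y t) mc M t)%N / total).
  rewrite INR_sum /Rdiv big_distrl; apply: eq_bigr => M _.
  by rewrite INR_sum big_distrl; apply: eq_bigr => t _; rewrite pMtE.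
have := total_gt0; rewrite sum_marg_count // mult_INR -/total => ?; field; lra.
Qed.

Lemma cond_entropy_const : cond_entropy phi C B X Y = L.
Proof.
rewrite /cond_entropy.
under eq_bigr => M MX do under eq_bigr => t tY do rewrite entropy_term //.
under eq_bigr do rewrite -big_distrl.
by rewrite -big_distrl /= sum_pMt Rmult_1_l.
Qed.

Lemma log_count_ratio : L =
  INR (k - rk C (Y :&: (B :|: X))) + INR #|~: (Y :|: (B :|: X))| - INR (k - rk C Y).
Proof.
have q_gt0 : (0 < #|A|)%N by apply: ltnW.
have lnq_gt0 : 0 < ln (INR #|A|).
  by rewrite -ln_1; apply: ln_increasing; [lra | apply/lt_1_INR/ltP].
rewrite /L /sZ /sY mult_INR /Rdiv ln_mult ?ln_Rinv ?ln_mult ?ln_INR_expn //;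
  try apply: Rmult_lt_0_compat; try apply: Rinv_0_lt_compat; try apply: INR_expn_gt0.
by field; lra.
Qed.

End Entropy.

Theorem mainTheorem10 (A : finType) (n k : nat) (C : {set {ffun 'I_n -> A}})
  (B : {set 'I_n}) (phi : A -> A -> A) (X Y : {set 'I_n}) :
  1 < #|A| ->
  almost_affine k C ->
  is_basis C B ->
  (forall y : A, bijective (phi y)) ->
  (forall y : A, bijective (fun x => phi x y)) ->
  X \subset ~: B ->
  cond_entropy phi C B X Y =
    Rminus (Rminus (Rminus (INR n) (INR k)) (INR #|X|)) (rho C B X Y).
Proof.
move=> A_gt1 C_aa basisB phi_bijr phi_bijl sXB.
have phi_injr a : injective (phi a) := bij_inj (phi_bijr a).
have phi_injl a : injective (phi^~ a) := bij_inj (phi_bijl a).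
rewrite (cond_entropy_const Y A_gt1 C_aa phi_injr phi_injl sXB).
rewrite (log_count_ratio k C B X Y A_gt1).
have := card_outside_coords Y sXB; rewrite (card_basis A_gt1 C_aa basisB).
move=> /(f_equal INR); rewrite /rho /rD !plus_INR !minus_INR;
  try exact/leP/(rk_le A_gt1 C_aa).
lra.
Qed.
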